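(* Let $H\subset\operatorname{GL}(V)$ be a complex algebraic torus acting on the finite-dimensional space $V$ with $V^H=(0)$, let $v\in V$, and let $G\subset\operatorname{Aff}(V)$ be the subgroup of affine transformations preserving $Hv$. Then (1) $G\subset\operatorname{GL}(V)$; (2) if $v$ is generic, then $G^0=H$.
   Context: $\operatorname{Aff}(V)=\operatorname{GL}(V)\ltimes V$ is the group of affine transformations of $V$. With $V=\bigoplus_i n_iV_i$ the isotypic decomposition under $H$ and $v=(v_{ij})$, $v_{ij}$ the component in the $j$th copy of $V_i$, $v$ is called generic if for each $i$ the vectors $v_{i1},\dots,v_{in_i}$ span an $n_i$-dimensional subspace of $V_i$ (equivalently, $Hv$ spans $V$). $G^0$ denotes the identity component. *)

(* The complex numbers are modelled as R[i] (mathcomp-real-closed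
   complex) for an arbitrary R : realType; for R = the reals this is C. *)
From HB Require Import structures.
From mathcomp Require Import all_boot all_order all_algebra.
From mathcomp Require Import reals complex.
From mathcomp Require Import mpoly.
Set Implicit Arguments. Unset Strict Implicit. Unset Printing Implicit Defensive.
Import Order.TTheory GRing.Theory Num.Theory.
Local Open Scope ring_scope.
Local Open Scope complex_scope.

Section Defs.
Variables (R : realType) (n : nat).
Local Notation C := (R[i]).
Local Notation Mat := ('M[C]_n).
Local Notation Vec := ('cV[C]_n).

(* An algebraic torus H in GL(V), V = C^n: in a suitable basis (columns of P)
   it is the image of (C^* )^r under diagonal characters t |-> t^(a i). *)
Definition torus_elt r (P : Mat) (a : 'I_n -> 'I_r -> int) (t : 'I_r -> C) : Mat :=
  P *m diag_mx (\row_i \prod_(k < r) (t k) ^ (a i k)) *m invmx P.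

Definition is_torus (H : Mat -> Prop) : Prop :=
  exists (r : nat) (P : Mat) (a : 'I_n -> 'I_r -> int),
    P \in unitmx /\
    forall M, H M <-> exists t : 'I_r -> C, (forall k, t k != 0) /\ M = torus_elt P a t.

Definition no_fixed_vectors (H : Mat -> Prop) : Prop :=
  forall w : Vec, (forall h, H h -> h *m w = w) -> w = 0.

Definition orbit (H : Mat -> Prop) (v : Vec) (w : Vec) : Prop :=
  exists h, H h /\ w = h *m v.

Definition affine_group (g : Mat * Vec) : Prop := g.1 \in unitmx.
Definition aff_act (g : Mat * Vec) (x : Vec) : Vec := g.1 *m x + g.2.

Definition orbit_stabilizer (H : Mat -> Prop) (v : Vec) (g : Mat * Vec) : Prop :=
  affine_group g /\
  forall w, orbit H v w <-> exists x, orbit H v x /\ w = aff_act g x.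

Definition generic (H : Mat -> Prop) (v : Vec) : Prop :=
  forall w : Vec, exists (k : nat) (hs : 'I_k -> Mat) (c : 'I_k -> C),
    (forall j, H (hs j)) /\ w = \sum_(j < k) c j *: (hs j *m v).

(* Zariski topology on Aff(V) (as a subspace of M_n(C) x C^n = C^(n*n+n)) *)
Definition aff_coords (g : Mat * Vec) : 'I_(n * n + n) -> C :=
  fun i => row_mx (mxvec g.1) (g.2)^T 0 i.

Definition zariski_closed (Z : Mat * Vec -> Prop) : Prop :=
  exists F : {mpoly C[n * n + n]} -> Prop,
    forall g, Z g <-> (forall p, F p -> p.@[aff_coords g] = 0).

Definition zariski_connected (Y : Mat * Vec -> Prop) : Prop :=
  forall Z1 Z2, zariski_closed Z1 -> zariski_closed Z2 ->
    (forall g, Y g -> Z1 g \/ Z2 g) ->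
    (forall g, Y g -> Z1 g -> Z2 g -> False) ->
    (forall g, Y g -> Z1 g) \/ (forall g, Y g -> Z2 g).

Definition identity_component (G : Mat * Vec -> Prop) (g : Mat * Vec) : Prop :=
  exists Y : Mat * Vec -> Prop,
    zariski_connected Y /\ (forall x, Y x -> G x) /\ Y (1%:M, 0) /\ Y g.

End Defs.

(* In an eigenbasis of the torus, [H] acts on the [j]-th coordinate through a
   character [chi_j], and [V^H = 0] says that no [chi_j] is trivial. Restricted
   to a cocharacter [z |-> z ^ lam] of [H], each coordinate of [g (Hv)], for
   [g x = A x + b] preserving [Hv], is a Laurent polynomial in [z]; as the
   corresponding coordinate of [Hv] is either identically zero or nowhere zero,
   that Laurent polynomial is zero or a monomial. Comparing constant terms gives
   [b = 0]. For generic [v] (no zero coordinate, pairwise distinct characters)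
   comparing exponents shows that [A] has at most one nonzero entry in each row.
   Such invertible matrices are either diagonal or have a zero diagonal entry,
   two Zariski closed conditions, so the identity component is diagonal, and a
   diagonal element of [G] lies in [H]. Conversely [H] is Zariski connected,
   since any two of its points lie on a line meeting it in a cofinite set. *)

From Pilot Require Import Defs.
From HB Require Import structures.
From mathcomp Require Import all_boot all_order all_algebra.
From mathcomp Require Import reals complex mpoly.
From mathcomp Require Import boolp zify ring.
Import Order.TTheory GRing.Theory Num.Theory.
Local Open Scope ring_scope.
Set Implicit Arguments. Unset Strict Implicit. Unset Printing Implicit Defensive.

Section PolyNumDomain.
Variable R : numDomainType.

Lemma poly_eq0_natr (p : {poly R}) : (forall k : nat, p.[k.+1%:R] = 0) -> p = 0.
Proof.
move=> p0; pose rs := [seq (k.+1)%:R : R | k <- iota 0 (size p)].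
apply: (@roots_geq_poly_eq0 _ p rs); last by rewrite size_map size_iota.
  by apply/allP => _ /mapP [k _ ->]; rewrite /root p0.
by rewrite map_inj_uniq ?iota_uniq // => x y /eqP; rewrite eqr_nat => /eqP [].
Qed.

Lemma poly_eq0_nonzero (p : {poly R}) : (forall z, z != 0 -> p.[z] = 0) -> p = 0.
Proof. by move=> p0; apply: poly_eq0_natr => k; rewrite p0 ?pnatr_eq0. Qed.

End PolyNumDomain.

(* Take [lam k = M ^ k] for a natural [M] that is a root of none of the
   nonzero polynomials [\sum_k d x k 'X^k]. *)
Lemma exists_nonorthogonal (I : finType) (r : nat) (d : I -> 'I_r -> int) :
  (forall x, exists k, d x k != 0) ->
  exists lam : 'I_r -> int, forall x, \sum_(k < r) lam k * d x k != 0.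
Proof.
move=> d_nz; pose q x : {poly int} := \sum_(k < r) d x k *: 'X^k.
have q_nz x : q x != 0.
  have [k dk_nz] := d_nz x; apply: contraNneq dk_nz => /(congr1 (coefp k)) /=.
  rewrite coef0 coef_sum (bigD1 k) //= coefZ coefXn eqxx mulr1 big1 ?addr0 => [->//|l lk].
  by rewrite coefZ coefXn eq_sym (inj_eq val_inj) (negPf lk) mulr0.
have prod_nz : \prod_x q x != 0 by apply/prodf_neq0 => x _.
have [M qM_nz] : exists M : nat, (\prod_x q x).[M.+1%:R] != 0.
  apply: contrapT => noM; move/negP: prod_nz; apply; apply/eqP/poly_eq0_natr => M.
  by apply/eqP/negPn/negP => qM_nz; apply: noM; exists M.
exists (fun k => (M.+1 ^ k)%:Z) => x; apply: contraNneq qM_nz => qx0.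
rewrite horner_prod (bigD1 x) //= horner_sum.
rewrite (eq_bigr (fun k : 'I_r => (M.+1 ^ k)%:Z * d x k)) ?qx0 ?mul0r // => k _.
by rewrite hornerZ hornerXn mulrC -natrX natz.
Qed.

Lemma poly_nonvanishing_monomial (F : numClosedFieldType) (p : {poly F}) :
  (forall z, z != 0 -> p.[z] != 0) -> exists (a : F) (d : nat), p = a *: 'X^d.
Proof.
move=> p_nz; have [rs Ep] := closed_field_poly_normal p.
exists (lead_coef p), (size rs); rewrite {1}Ep; congr (_ *: _).
have /allP rs0 : all (pred1 0) rs.
  apply/allP => z z_rs; apply: contraT => z_nz; have := p_nz z z_nz.
  by rewrite Ep hornerZ horner_prod (big_rem z) //= hornerXsubC subrr mul0r mulr0 eqxx.
rewrite (eq_big_seq (fun=> 'X)) => [|z /rs0 /eqP ->]; last by rewrite subr0.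
by rewrite big_const_seq count_predT; elim: (size rs) => //= k ->; rewrite exprS.
Qed.

Section LaurentPolynomial.
Variables (F : numClosedFieldType) (I : finType) (c0 : F) (c : I -> F) (m : I -> int).

Definition laurent (z : F) : F := c0 + \sum_j c j * z ^ m j.

Definition laurent_coef (k : int) : F := (k == 0)%:R * c0 + \sum_(j | m j == k) c j.

Let shift : nat := (\sum_j `|m j|)%N.

Let shift_ge j : 0 <= m j + shift.
Proof.
have : (`|m j| <= shift)%N by rewrite /shift (bigD1 j) //= leq_addr.
lia.
Qed.

Let lpoly : {poly F} := c0 *: 'X^shift + \sum_j c j *: 'X^(absz (m j + shift)).

Let lpolyE z : z != 0 -> z ^+ shift * laurent z = lpoly.[z].
Proof.
move=> z_nz; rewrite hornerD hornerZ hornerXn horner_sum mulrDr mulrC mulr_sumr.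
congr (_ + _); apply: eq_bigr => j _; rewrite hornerZ hornerXn mulrCA.
by congr (_ * _); rewrite !exprnP -expfzDr // addrC gez0_abs ?shift_ge.
Qed.

Let coef_lpoly (i : nat) : lpoly`_i = laurent_coef (i%:Z - shift%:Z).
Proof.
rewrite coefD coefZ coefXn coef_sum /laurent_coef; congr (_ + _).
  by rewrite mulrC; congr (_%:R * _); apply/eqP/eqP; lia.
rewrite [RHS]big_mkcond; apply: eq_bigr => j _; rewrite coefZ coefXn.
have mj_ge := shift_ge j.
have -> : (i == absz (m j + shift)) = (m j == i%:Z - shift%:Z) by apply/eqP/eqP; lia.
by case: eqP; rewrite ?mulr1 ?mulr0.
Qed.

Let laurent_coef_out (k : int) : k + shift < 0 -> laurent_coef k = 0.
Proof.
move=> k_lt; rewrite /laurent_coef big_pred0 => [|j]; last first.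
  by have := shift_ge j; apply: contraTF => /eqP mj; lia.
have /negbTE -> : k != 0 by apply/eqP; lia.
by rewrite mul0r addr0.
Qed.

Let laurent_coef_lpoly (k : int) :
  0 <= k + shift -> laurent_coef k = lpoly`_(absz (k + shift)).
Proof. by move=> k_ge; rewrite coef_lpoly; congr laurent_coef; lia. Qed.

Lemma laurent_coef_eq0 :
  (forall z, z != 0 -> laurent z = 0) -> forall k, laurent_coef k = 0.
Proof.
move=> l0 k; have lpoly0 : lpoly = 0.
  by apply: poly_eq0_nonzero => z z_nz; rewrite -lpolyE // l0 // mulr0.
have [k_lt | k_ge] := ltP (k + shift) 0; first exact: laurent_coef_out.
by rewrite laurent_coef_lpoly // lpoly0 coef0.
Qed.

Lemma laurent_monomial : (forall z, z != 0 -> laurent z != 0) ->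
  exists e, (forall k, k != e -> laurent_coef k = 0) /\
            (forall z, z != 0 -> laurent z = laurent_coef e * z ^ e).
Proof.
move=> l_nz; have [a [d lpolyE']] : exists a d, lpoly = a *: 'X^d.
  apply: poly_nonvanishing_monomial => z z_nz.
  by rewrite -lpolyE // mulf_neq0 ?expf_neq0 ?l_nz.
have coef_e : laurent_coef (d%:Z - shift%:Z) = a.
  by rewrite -coef_lpoly lpolyE' coefZ coefXn eqxx mulr1.
exists (d%:Z - shift%:Z); split=> [k ke | z z_nz].
  have [k_lt | k_ge] := ltP (k + shift) 0; first exact: laurent_coef_out.
  rewrite laurent_coef_lpoly // lpolyE' coefZ coefXn.
  by case: eqP => [kd | _]; [move: ke; rewrite -kd; lia | rewrite mulr0].
apply: (mulfI (expf_neq0 shift z_nz)); rewrite lpolyE // lpolyE' hornerZ hornerXn.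
by rewrite coef_e mulrCA [z ^+ shift]exprnP -expfzDr // addrC subrK.
Qed.

Lemma laurent_coef0 : (forall j, m j != 0) -> laurent_coef 0 = c0.
Proof.
by move=> m_nz; rewrite /laurent_coef eqxx mul1r big_pred0 ?addr0 // => j; apply/negbTE.
Qed.

Lemma laurent_const : (forall j, m j != 0) -> c0 != 0 ->
  (forall z, z != 0 -> laurent z != 0) -> forall z, z != 0 -> laurent z = c0.
Proof.
move=> m_nz c0_nz l_nz z z_nz; have [e [coef_e laurentE]] := laurent_monomial l_nz.
have [e0 | e_nz] := eqVneq e 0; last first.
  by move: c0_nz; rewrite -(laurent_coef0 m_nz) coef_e ?eqxx // eq_sym.
by rewrite laurentE // e0 expr0z mulr1 laurent_coef0.
Qed.

Lemma laurent_single : c0 = 0 -> injective m ->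
  (forall z, z != 0 -> laurent z != 0) -> forall j l, j != l -> c j = 0 \/ c l = 0.
Proof.
move=> c00 m_inj l_nz j l jl; have [e [coef_e _]] := laurent_monomial l_nz.
have coef_m i : laurent_coef (m i) = c i.
  by rewrite /laurent_coef c00 mulr0 add0r (big_pred1 i) // => i'; apply: inj_eq.
have [mj | mj] := eqVneq (m j) e; last by left; rewrite -coef_m coef_e.
by right; rewrite -coef_m coef_e // -mj (inj_eq m_inj) eq_sym.
Qed.

End LaurentPolynomial.

Section RegularFunctions.
Variables (F : numFieldType) (Q : {poly F}).

Definition regular_off (f : F -> F) : Prop := exists den num : {poly F},
  forall z, Q.[z] != 0 -> den.[z] != 0 /\ den.[z] * f z = num.[z].

Lemma eq_regular_off f g : f =1 g -> regular_off f -> regular_off g.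
Proof. by move=> fg [den [num fE]]; exists den, num => z /fE; rewrite fg. Qed.

Lemma regular_off_poly p : regular_off (fun z => p.[z]).
Proof. by exists 1, p => z _; rewrite hornerC oner_eq0 mul1r. Qed.

Lemma regular_off_const a : regular_off (fun=> a).
Proof. by apply: eq_regular_off (regular_off_poly a%:P) => z; rewrite hornerC. Qed.

Lemma regular_offD f g :
  regular_off f -> regular_off g -> regular_off (fun z => f z + g z).
Proof.
move=> [d1 [p1 fE]] [d2 [p2 gE]]; exists (d1 * d2), (p1 * d2 + p2 * d1) => z zQ.
have [d1_nz f_z] := fE z zQ; have [d2_nz g_z] := gE z zQ.
by rewrite hornerD !hornerM mulf_neq0 // -f_z -g_z; split=> //; ring.
Qed.

Lemma regular_offM f g :
  regular_off f -> regular_off g -> regular_off (fun z => f z * g z).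
Proof.
move=> [d1 [p1 fE]] [d2 [p2 gE]]; exists (d1 * d2), (p1 * p2) => z zQ.
have [d1_nz f_z] := fE z zQ; have [d2_nz g_z] := gE z zQ.
by rewrite !hornerM mulf_neq0 // -f_z -g_z; split=> //; ring.
Qed.

Lemma regular_offV p :
  (forall z, Q.[z] != 0 -> p.[z] != 0) -> regular_off (fun z => p.[z]^-1).
Proof. by move=> p_nz; exists p, 1 => z /p_nz pz_nz; rewrite hornerC mulfV. Qed.

Lemma regular_off_sum (I : Type) (s : seq I) (f : I -> F -> F) :
  (forall i, regular_off (f i)) -> regular_off (fun z => \sum_(i <- s) f i z).
Proof.
move=> f_reg; elim: s => [|i s IHs].
  by apply: eq_regular_off (regular_off_const 0) => z; rewrite big_nil.
by apply: eq_regular_off (regular_offD (f_reg i) IHs) => z; rewrite big_cons.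
Qed.

Lemma regular_off_prod (I : Type) (s : seq I) (f : I -> F -> F) :
  (forall i, regular_off (f i)) -> regular_off (fun z => \prod_(i <- s) f i z).
Proof.
move=> f_reg; elim: s => [|i s IHs].
  by apply: eq_regular_off (regular_off_const 1) => z; rewrite big_nil.
by apply: eq_regular_off (regular_offM (f_reg i) IHs) => z; rewrite big_cons.
Qed.

Lemma regular_offXn f k : regular_off f -> regular_off (fun z => f z ^+ k).
Proof.
move=> f_reg; elim: k => [|k IHk].
  by apply: eq_regular_off (regular_off_const 1) => z; rewrite expr0.
by apply: eq_regular_off (regular_offM f_reg IHk) => z; rewrite exprS.
Qed.

Lemma regular_off_exprz p (e : int) :
  (forall z, Q.[z] != 0 -> p.[z] != 0) -> regular_off (fun z => p.[z] ^ e).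
Proof.
case: e => k p_nz; first exact: regular_offXn (regular_off_poly p).
apply: eq_regular_off (regular_offV (p := p ^+ k.+1) _) => [z|z zQ].
  by rewrite horner_exp NegzE -exprnN.
by rewrite horner_exp expf_neq0 ?p_nz.
Qed.

Lemma regular_off_meval (N : nat) (x : F -> 'I_N -> F) (p : {mpoly F[N]}) :
  (forall i, regular_off (fun z => x z i)) -> regular_off (fun z => p.@[x z]).
Proof.
move=> x_reg; apply: eq_regular_off (fun z => esym (mevalE (x z) p)) _.
apply: regular_off_sum => mon; apply: regular_offM (regular_off_const _) _.
by apply: regular_off_prod => i; apply: regular_offXn.
Qed.

(* Clearing denominators, the product of the numerators and [Q] vanishes on
   the whole line. *)
Lemma regular_off_mul_eq0 f g : Q != 0 -> regular_off f -> regular_off g ->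
  (forall z, Q.[z] != 0 -> f z * g z = 0) ->
  (forall z, Q.[z] != 0 -> f z = 0) \/ (forall z, Q.[z] != 0 -> g z = 0).
Proof.
move=> Q_nz [d1 [p1 fE]] [d2 [p2 gE]] fg0.
have : p1 * p2 * Q = 0.
  apply: poly_eq0_nonzero => z _; rewrite !hornerM.
  have [zQ | zQ] := eqVneq Q.[z] 0; first by rewrite zQ mulr0.
  have [_ <-] := fE z zQ; have [_ <-] := gE z zQ.
  by rewrite mulrACA fg0 // mulr0 mul0r.
move/eqP; rewrite !mulf_eq0 (negPf Q_nz) orbF => /orP [] /eqP p0; [left | right] => z zQ.
  have [d_nz] := fE z zQ; rewrite p0 horner0 => /eqP.
  by rewrite mulf_eq0 (negPf d_nz) => /eqP.
have [d_nz] := gE z zQ; rewrite p0 horner0 => /eqP.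
by rewrite mulf_eq0 (negPf d_nz) => /eqP.
Qed.

End RegularFunctions.

Section ZariskiConnected.
Variables (R : realType) (n : nat).
Local Notation C := R[i].
Local Notation Aff := ('M[C]_n * 'cV[C]_n)%type.

Let nonvanishing_witness (S : {mpoly C[n * n + n]} -> Prop) x :
  ~ (forall p, S p -> p.@[x] = 0) -> exists2 p, S p & p.@[x] != 0.
Proof. by move=> /existsNP [p /not_implyP [Sp /eqP px]]; exists p. Qed.

(* If closed sets [Z1], [Z2] split [Y], a curve from a point outside [Z1] to a
   point outside [Z2] would split the irreducible curve. *)
Lemma zariski_connected_curves (Y : Aff -> Prop) :
  (forall y1 y2, Y y1 -> Y y2 -> exists (Q : {poly C}) (gam : C -> Aff),
     [/\ Q.[0] != 0, Q.[1] != 0, gam 0 = y1, gam 1 = y2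
       & forall z, Q.[z] != 0 -> Y (gam z)] /\
     forall i, regular_off Q (fun z => aff_coords (gam z) i)) ->
  zariski_connected Y.
Proof.
move=> curve Z1 Z2 [S1 Z1E] [S2 Z2E] cover _.
case: (pselect (forall g, Y g -> Z1 g)) => [|/existsNP [y1 /not_implyP [Yy1 y1_Z1]]].
  by left.
right=> y2 Yy2; apply: contrapT => y2_Z2.
have [p S1p p_y1] : exists2 p, S1 p & p.@[aff_coords y1] != 0.
  by apply: nonvanishing_witness => p0; apply/y1_Z1/Z1E.
have [q S2q q_y2] : exists2 q, S2 q & q.@[aff_coords y2] != 0.
  by apply: nonvanishing_witness => q0; apply/y2_Z2/Z2E.
have [Q [gam [[Q0 Q1 gam0 gam1 gam_Y] gam_reg]]] := curve y1 y2 Yy1 Yy2.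
have Q_nz : Q != 0 by apply: contraNneq Q0 => ->; rewrite horner0.
have [z zQ | p0 | q0] := regular_off_mul_eq0 Q_nz
  (regular_off_meval p gam_reg) (regular_off_meval q gam_reg).
- have [/Z1E Z1z | /Z2E Z2z] := cover _ (gam_Y z zQ).
    by rewrite Z1z ?mul0r.
  by rewrite [q.@[_]]Z2z ?mulr0.
- by move: p_y1; rewrite -gam0 p0 ?eqxx.
- by move: q_y2; rewrite -gam1 q0 ?eqxx.
Qed.

Lemma regular_off_aff_coords (Q : {poly C}) (M : C -> 'M[C]_n) :
  (forall k l, regular_off Q (fun z => M z k l)) ->
  forall i, regular_off Q (fun z => aff_coords (M z, 0) i).
Proof.
move=> M_reg i; rewrite /aff_coords -(splitK i); case: (split i) => j /=.
  case/mxvec_indexP: j => k l.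
  by apply: eq_regular_off (M_reg k l) => z; rewrite row_mxEl mxvecE.
by apply: eq_regular_off (regular_off_const Q 0) => z; rewrite row_mxEr !mxE.
Qed.

End ZariskiConnected.

Section TorusOrbit.
Variables (R : realType) (n r : nat) (P : 'M[R[i]]_n) (a : 'I_n -> 'I_r -> int).
Variables (H : 'M[R[i]]_n -> Prop) (v : 'cV[R[i]]_n).
Hypothesis P_unit : P \in unitmx.
Hypothesis HE :
  forall M, H M <-> exists t, (forall k, t k != 0) /\ M = torus_elt P a t.
Local Notation C := R[i].
Local Notation T := (torus_elt P a).

Definition torus_point (t : 'I_r -> C) : Prop := forall k, t k != 0.

Definition chi (t : 'I_r -> C) (j : 'I_n) : C := \prod_(k < r) t k ^ a j k.

Definition cocurve (t : 'I_r -> C) (lam : 'I_r -> int) (z : C) : 'I_r -> C :=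
  fun k => t k * z ^ lam k.

(* coordinates in the eigenbasis (the columns of [P]) of the torus *)
Definition coord (x : 'cV[C]_n) (j : 'I_n) : C := (invmx P *m x) j 0.

Definition conj_entry (A : 'M[C]_n) (i j : 'I_n) : C := (invmx P *m A *m P) i j.

Lemma torus_eltE t : T t = P *m diag_mx (\row_j chi t j) *m invmx P.
Proof. by []. Qed.

(* Unfolding [torus_elt] during unification means computing with matrices. *)
Local Opaque torus_elt.

Lemma eq_torus_elt t s : t =1 s -> T t = T s.
Proof.
move=> ts; have chi_ts : \row_j chi t j = \row_j chi s j.
  by apply/rowP => j; rewrite !mxE; apply: eq_bigr => k _; rewrite ts.
by rewrite !torus_eltE chi_ts.
Qed.

Lemma chi_neq0 t j : torus_point t -> chi t j != 0.
Proof. by move=> t_nz; apply/prodf_neq0 => k _; apply: expfz_neq0. Qed.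

Lemma chiM t s j : torus_point t -> torus_point s ->
  chi (fun k => t k * s k) j = chi t j * chi s j.
Proof.
by move=> t_nz s_nz; rewrite /chi -big_split; apply: eq_bigr => k _; rewrite expfzMl.
Qed.

Lemma chi1 j : chi (fun=> 1) j = 1.
Proof. by rewrite /chi big1 // => k _; rewrite exp1rz. Qed.

Lemma chi_cocurve t lam z j : torus_point t -> z != 0 ->
  chi (cocurve t lam z) j = chi t j * z ^ (\sum_(k < r) lam k * a j k).
Proof.
move=> t_nz z_nz; rewrite /chi /cocurve.
rewrite (big_morph (fun e => z ^ e) (fun e1 e2 => expfzDr e1 e2 z_nz) (expr0z z)).
by rewrite -big_split; apply: eq_bigr => k _; rewrite expfzMl exprz_exp.
Qed.

Lemma torus_pointM t s : torus_point t -> torus_point s ->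
  torus_point (fun k => t k * s k).
Proof. by move=> t_nz s_nz k; rewrite mulf_neq0. Qed.

Lemma torus_pointV t : torus_point t -> torus_point (fun k => (t k)^-1).
Proof. by move=> t_nz k; rewrite invr_eq0. Qed.

Lemma torus_point_cocurve t lam z : torus_point t -> z != 0 ->
  torus_point (cocurve t lam z).
Proof. by move=> t_nz z_nz k; rewrite mulf_neq0 ?expfz_neq0. Qed.

Lemma cocurve1 t lam : cocurve t lam 1 =1 t.
Proof. by move=> k; rewrite /cocurve exp1rz mulr1. Qed.

Let conj_mxM (D1 D2 : 'M[C]_n) :
  (P *m D1 *m invmx P) *m (P *m D2 *m invmx P) = P *m (D1 *m D2) *m invmx P.
Proof. by rewrite !mulmxA (mulmxKV P_unit) -(mulmxA P D1 D2). Qed.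

Lemma torus_eltM t s : torus_point t -> torus_point s ->
  T t *m T s = T (fun k => t k * s k).
Proof.
move=> t_nz s_nz; rewrite !torus_eltE conj_mxM mulmx_diag.
suff -> : \row_j ((\row_j chi t j) 0 j * (\row_j chi s j) 0 j) =
          \row_j chi (fun k => t k * s k) j by [].
by apply/rowP => j; rewrite !mxE chiM.
Qed.

Lemma torus_eltMv t s (x : 'cV[C]_n) : torus_point t -> torus_point s ->
  T t *m (T s *m x) = T (fun k => t k * s k) *m x.
Proof. by move=> t_nz s_nz; rewrite -(torus_eltM t_nz s_nz) mulmxA. Qed.

Lemma torus_elt1 : T (fun=> 1) = 1%:M.
Proof.
rewrite torus_eltE (_ : diag_mx _ = 1%:M) ?mulmx1 ?mulmxV //.
by apply/matrixP => i j; rewrite !mxE chi1.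
Qed.

Lemma torus_elt_unit t : torus_point t -> T t \in unitmx.
Proof.
move=> t_nz; have tV_nz := torus_pointV t_nz.
have tV : T t *m T (fun k => (t k)^-1) = 1%:M.
  by rewrite torus_eltM // -torus_elt1; apply: eq_torus_elt => k; rewrite mulfV.
exact: (mulmx1_unit tV).1.
Qed.

Lemma torus_elt_entry t k l : T t k l = \sum_i P k i * (chi t i * invmx P i l).
Proof.
by rewrite torus_eltE -mulmxA mxE; apply: eq_bigr => i _; rewrite mul_diag_mx !mxE.
Qed.

Lemma coord_torus_elt t x j : coord (T t *m x) j = chi t j * coord x j.
Proof.
by rewrite /coord torus_eltE !mulmxA mulVmx // mul1mx -mulmxA mul_diag_mx !mxE.
Qed.

Lemma coord_aff A b x i :
  coord (A *m x + b) i = coord b i + \sum_j conj_entry A i j * coord x j.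
Proof.
rewrite /coord mulmxDr mxE addrC; congr (_ + _).
have -> : invmx P *m (A *m x) = (invmx P *m A *m P) *m (invmx P *m x).
  by rewrite !mulmxA (mulmxK P_unit).
by rewrite mxE.
Qed.

Lemma conj_entry1 i j : conj_entry 1%:M i j = (i == j)%:R.
Proof. by rewrite /conj_entry mulmx1 mulVmx // mxE. Qed.

Lemma coord_basis j k : coord (P *m delta_mx j 0) k = (k == j)%:R.
Proof. by rewrite /coord mulKmx // mxE andbT. Qed.

Lemma aff_act0 (A : 'M[C]_n) x : aff_act (A, 0) x = A *m x.
Proof. exact: addr0. Qed.

Lemma torus_point1 : torus_point (fun=> 1).
Proof. by move=> k; apply: oner_neq0. Qed.

Lemma torus_elt_in t : torus_point t -> H (T t).
Proof. by move=> t_nz; apply/HE; exists t. Qed.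

Lemma stabilizer_image g t : orbit_stabilizer H v g -> torus_point t ->
  exists2 s, torus_point s & aff_act g (T t *m v) = T s *m v.
Proof.
move=> [_ gO] t_nz.
have [_ [/HE [s [s_nz ->]] gE]] : Defs.orbit H v (aff_act g (T t *m v)).
  apply/gO; exists (T t *m v); split=> //.
  by exists (T t); split=> //; apply: torus_elt_in.
by exists s.
Qed.

Lemma stabilizer_preimage g s : orbit_stabilizer H v g -> torus_point s ->
  exists2 t, torus_point t & aff_act g (T t *m v) = T s *m v.
Proof.
move=> [_ gO] s_nz.
have [_ [[_ [/HE [t [t_nz ->]] ->]] gE]] :
    exists x, Defs.orbit H v x /\ T s *m v = aff_act g x.
  by apply/gO; exists (T s); split=> //; apply: torus_elt_in.
by exists t.
Qed.

Lemma coord_stabilizer_cocurve g t lam z i : torus_point t -> z != 0 ->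
  coord (aff_act g (T (cocurve t lam z) *m v)) i =
  laurent (coord g.2 i) (fun j => conj_entry g.1 i j * coord v j * chi t j)
          (fun j => \sum_(k < r) lam k * a j k) z.
Proof.
move=> t_nz z_nz; rewrite coord_aff /laurent; congr (_ + _); apply: eq_bigr => j _.
by rewrite coord_torus_elt chi_cocurve //; ring.
Qed.

Lemma no_fixed_vectors_characters :
  no_fixed_vectors H -> forall j, exists k, a j k != 0.
Proof.
move=> nf j; apply: contrapT => /forallNP a0.
have chi_j t : chi t j = 1.
  by rewrite /chi big1 // => k _; move/negP/negPn/eqP: (a0 k) => ->; rewrite expr0z.
have Pe0 : P *m (delta_mx j 0 : 'cV[C]_n) = 0.
  apply: nf => _ /HE [t [t_nz ->]]; apply/(can_inj (mulKVmx P_unit))/colP => k.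
  rewrite -[LHS]/(coord _ k) -[RHS]/(coord _ k) coord_torus_elt coord_basis.
  by have [-> | _] := eqVneq k j; rewrite ?chi_j ?mul1r ?mulr0.
move: (congr1 (coord^~ j) Pe0); rewrite coord_basis eqxx /coord mulmx0 mxE.
by move/eqP; rewrite oner_eq0.
Qed.

(* Along a cocharacter [lam] with [<lam, a_j> != 0] for all [j], the [i]-th
   coordinate of [g] applied to the orbit is a Laurent polynomial with constant
   term [b_i]. It vanishes identically if [v_i = 0]. Otherwise it has no zero,
   so if [b_i != 0] it is the constant [b_i]; but the [i]-th coordinate
   [chi_i v_i] of the orbit is not constant. *)
Lemma stabilizer_translation_eq0 g :
  no_fixed_vectors H -> orbit_stabilizer H v g -> g.2 = 0.
Proof.
move=> nf gG; have [lam lam_nz] := exists_nonorthogonal (no_fixed_vectors_characters nf).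
suff coord_b0 i : coord g.2 i = 0.
  rewrite -[g.2](mulKVmx P_unit) (_ : invmx P *m g.2 = 0) ?mulmx0 //.
  by apply/colP => i; rewrite [RHS]mxE; apply: coord_b0.
pose c t j := conj_entry g.1 i j * coord v j * chi t j.
pose f t := laurent (coord g.2 i) (c t) (fun j => \sum_(k < r) lam k * a j k).
have f_orbit t z : torus_point t -> z != 0 ->
    exists2 s, torus_point s & f t z = chi s i * coord v i.
  move=> t_nz z_nz.
  have [s s_nz gE] := stabilizer_image gG (torus_point_cocurve lam t_nz z_nz).
  by exists s; rewrite // /f -coord_stabilizer_cocurve // gE coord_torus_elt.
have [v0 | v_nz] := eqVneq (coord v i) 0.
  rewrite -(laurent_coef0 (coord g.2 i) (c (fun=> 1)) lam_nz).
  apply: laurent_coef_eq0 => z z_nz.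
  by have [s _] := f_orbit _ z torus_point1 z_nz; rewrite /f => ->; rewrite v0 mulr0.
have [-> // | b_nz] := eqVneq (coord g.2 i) 0.
have image_const t : torus_point t -> coord (aff_act g (T t *m v)) i = coord g.2 i.
  move=> t_nz; rewrite -(eq_torus_elt (cocurve1 t lam)).
  rewrite coord_stabilizer_cocurve ?oner_neq0 //.
  apply: (laurent_const lam_nz b_nz _ (oner_neq0 _)) => z z_nz.
  have [s s_nz] := f_orbit t z t_nz z_nz; rewrite /f => ->.
  by rewrite mulf_neq0 ?chi_neq0.
have orbit_const s : torus_point s -> chi s i * coord v i = coord g.2 i.
  move=> s_nz; have [t t_nz gE] := stabilizer_preimage gG s_nz.
  by rewrite -coord_torus_elt -gE image_const.
have chi_const s t : torus_point s -> torus_point t -> chi s i = chi t i.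
  by move=> s_nz t_nz; apply: (mulIf v_nz); rewrite !orbit_const.
have two_nz : (2 : C) != 0 by rewrite pnatr_eq0.
have := chi_const _ _ (torus_point_cocurve lam torus_point1 two_nz) torus_point1.
rewrite (chi_cocurve lam i torus_point1 two_nz) -[X in _ = X]mulr1.
move=> /(mulfI (chi_neq0 i torus_point1)) /eqP.
by rewrite pexprz_eq1 ?ler0n // (negPf (lam_nz i)) pnatr_eq1.
Qed.

Let sum_delta (f : 'I_n -> C) i : \sum_k (k == i)%:R * f k = f i.
Proof.
rewrite (bigD1 i) //= eqxx mul1r big1 ?addr0 // => k ki.
by rewrite (negPf ki) mul0r.
Qed.

Lemma generic_linear_relation (phi : 'I_n -> C) : generic H v ->
  (forall t, torus_point t -> \sum_k phi k * coord (T t *m v) k = 0) ->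
  forall x, \sum_k phi k * coord x k = 0.
Proof.
move=> gen phi0 x; have [N [hs [c [hsH ->]]]] := gen x.
have coord_sum k : coord (\sum_(j < N) c j *: (hs j *m v)) k =
                   \sum_(j < N) c j * coord (hs j *m v) k.
  by rewrite /coord mulmx_sumr summxE; apply: eq_bigr => j _; rewrite -scalemxAr mxE.
under eq_bigr do rewrite coord_sum mulr_sumr.
rewrite exchange_big big1 // => j _; have /HE [t [t_nz ->]] := hsH j.
rewrite (eq_bigr (fun k => c j * (phi k * coord (T t *m v) k))) => [|k _].
  by rewrite -mulr_sumr phi0 // mulr0.
by rewrite mulrCA.
Qed.

Lemma generic_coord_neq0 : generic H v -> forall i, coord v i != 0.
Proof.
move=> gen i; apply/eqP => v0.
have orbit0 t : torus_point t -> \sum_k (k == i)%:R * coord (T t *m v) k = 0.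
  by move=> t_nz; rewrite sum_delta coord_torus_elt v0 mulr0.
have := generic_linear_relation gen orbit0 (P *m delta_mx i 0).
by rewrite sum_delta coord_basis eqxx => /eqP; rewrite oner_eq0.
Qed.

Lemma generic_characters_distinct :
  generic H v -> forall j l, j != l -> exists k, a j k != a l k.
Proof.
move=> gen j l jl; apply: contrapT => /forallNP a_eq.
have chi_eq t : chi t j = chi t l.
  by apply: eq_bigr => k _; move/negP/negPn/eqP: (a_eq k) => ->.
pose phi k := (k == j)%:R * coord v l - (k == l)%:R * coord v j.
have phiE x : \sum_k phi k * coord x k = coord v l * coord x j - coord v j * coord x l.
  rewrite /phi; under eq_bigr do rewrite mulrBl -!mulrA.
  by rewrite sumrB !sum_delta.
have orbit0 t : torus_point t -> \sum_k phi k * coord (T t *m v) k = 0.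
  by move=> t_nz; rewrite phiE !coord_torus_elt chi_eq; ring.
have := generic_linear_relation gen orbit0 (P *m delta_mx j 0).
rewrite phiE !coord_basis eqxx eq_sym (negPf jl) mulr1 mulr0 subr0 => /eqP.
by rewrite (negPf (generic_coord_neq0 gen l)).
Qed.

(* Restricted to a curve through the cocharacter [lam] separating the characters,
   row [i] of [A] gives a nonvanishing Laurent polynomial with distinct exponents. *)
Lemma stabilizer_row_monomial g : generic H v -> orbit_stabilizer H v g -> g.2 = 0 ->
  forall i j l, j != l -> conj_entry g.1 i j = 0 \/ conj_entry g.1 i l = 0.
Proof.
move=> gen gG b0 i j l jl.
have sep (p : {p : 'I_n * 'I_n | p.1 != p.2}) :
    exists k, a (val p).1 k - a (val p).2 k != 0.
  case: p => [[j' l'] /= jl']; have [k ak] := generic_characters_distinct gen jl'.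
  by exists k; rewrite subr_eq0.
have [lam lam_sep] := exists_nonorthogonal sep.
pose m j := \sum_(k < r) lam k * a j k.
have m_inj : injective m.
  move=> j1 l1 m_eq; apply/eqP; apply: contraT => jl1.
  have := lam_sep (exist _ (j1, l1) jl1).
  have -> : \sum_(k < r) lam k * (a j1 k - a l1 k) = m j1 - m l1.
    by rewrite /m -sumrB; apply: eq_bigr => k _; rewrite mulrBr.
  by rewrite m_eq subrr eqxx.
have c0 : coord g.2 i = 0 by rewrite b0 /coord mulmx0 mxE.
have row_nz z : z != 0 -> laurent (coord g.2 i)
    (fun j => conj_entry g.1 i j * coord v j * chi (fun=> 1) j) m z != 0.
  move=> z_nz; rewrite -(coord_stabilizer_cocurve g lam i torus_point1 z_nz).
  have [s s_nz ->] := stabilizer_image gG (torus_point_cocurve lam torus_point1 z_nz).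
  by rewrite coord_torus_elt mulf_neq0 ?chi_neq0 ?generic_coord_neq0.
have v_nz := generic_coord_neq0 gen; have chi1_nz j := chi_neq0 j torus_point1.
by case: (laurent_single c0 m_inj row_nz jl) => /eqP;
  rewrite !mulf_eq0 (negPf (v_nz _)) (negPf (chi1_nz _)) !orbF => /eqP; [left | right].
Qed.

Definition eigen_diagonal (x : 'M[C]_n * 'cV[C]_n) : Prop :=
  forall i j, i != j -> conj_entry x.1 i j = 0.

Lemma stabilizer_diagonal_in_torus g : generic H v -> orbit_stabilizer H v g ->
  g.2 = 0 -> eigen_diagonal g -> H g.1.
Proof.
move=> gen gG b0 diag; have [s s_nz gE] := stabilizer_image gG torus_point1.
apply/HE; exists s; split=> //.
suff conjE : invmx P *m g.1 *m P = diag_mx (\row_j chi s j).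
  by rewrite torus_eltE -conjE !mulmxA (mulmxK P_unit) mulmxV // mul1mx.
apply/matrixP => i j; rewrite [RHS]mxE [X in _ = X *+ _]mxE -/(conj_entry _ i j).
have [<- | ij] := eqVneq i j; last by rewrite diag.
apply: (mulIf (generic_coord_neq0 gen i)); rewrite mulr1n.
move: (congr1 (coord^~ i) gE); rewrite coord_torus_elt torus_elt1 mul1mx /aff_act.
rewrite coord_aff b0 /coord mulmx0 mxE add0r (bigD1 i) //= big1 ?addr0 // => k ki.
by rewrite diag ?mul0r // eq_sym.
Qed.

Definition conj_entry_poly (i j : 'I_n) : {mpoly C[n * n + n]} :=
  \sum_(k < n) \sum_(l < n) (invmx P i k * P l j) *: 'X_(lshift n (mxvec_index k l)).

Lemma conj_entry_polyE g i j : (conj_entry_poly i j).@[aff_coords g] = conj_entry g.1 i j.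
Proof.
rewrite /conj_entry_poly (big_morph _ (mevalD _) (meval0 _)).
under eq_bigr do rewrite (big_morph _ (mevalD _) (meval0 _)).
rewrite exchange_big /conj_entry mxE; apply: eq_bigr => l _; rewrite mxE mulr_suml.
apply: eq_bigr => k _.
by rewrite mevalZ mevalXU /aff_coords row_mxEl mxvecE mulrAC.
Qed.

Definition eigen_diagonal_degenerate (x : 'M[C]_n * 'cV[C]_n) : Prop :=
  \prod_i conj_entry x.1 i i = 0.

Lemma zariski_closed_eigen_diagonal : zariski_closed eigen_diagonal.
Proof.
exists (fun p => exists i j, i != j /\ p = conj_entry_poly i j) => x; split.
  by move=> diag_x p [i [j [ij ->]]]; rewrite conj_entry_polyE diag_x.
by move=> diag_x i j ij; rewrite -conj_entry_polyE; apply: diag_x; exists i, j.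
Qed.

Lemma zariski_closed_eigen_diagonal_degenerate :
  zariski_closed eigen_diagonal_degenerate.
Proof.
exists (fun p => p = \prod_i conj_entry_poly i i) => x.
have prodE : (\prod_i conj_entry_poly i i).@[aff_coords x] = \prod_i conj_entry x.1 i i.
  rewrite (big_morph _ (mevalM _) (meval1 _)).
  by apply: eq_bigr => i _; rewrite conj_entry_polyE.
by rewrite /eigen_diagonal_degenerate -prodE; split=> [x0 p -> // | ]; apply.
Qed.

Lemma eigen_diagonal_degenerate_unit x : x.1 \in unitmx ->
  eigen_diagonal x -> eigen_diagonal_degenerate x -> False.
Proof.
move=> x_unit diag_x.
have : invmx P *m x.1 *m P \in unitmx by rewrite !unitmx_mul unitmx_inv P_unit x_unit.
rewrite unitmxE det_trig ?unitfE => [/eqP x0 /x0 // |].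
by apply/is_diag_mx_is_trig/is_diag_mxP => i j ij; apply: diag_x.
Qed.

(* By row-monomiality the two closed sets where the matrix is diagonal in the
   eigenbasis, resp. has a zero diagonal entry there, cover the stabilizer, and
   invertibility makes them disjoint on it. *)
Lemma identity_component_sub_torus g : generic H v -> no_fixed_vectors H ->
  identity_component (orbit_stabilizer H v) g -> H g.1 /\ g.2 = 0.
Proof.
move=> gen nf [Y [Y_conn [YG [Y1 Yg]]]].
have b0 x : Y x -> x.2 = 0 by move=> Yx; apply: stabilizer_translation_eq0 nf (YG x Yx).
have cover x : Y x -> eigen_diagonal x \/ eigen_diagonal_degenerate x.
  move=> Yx; have [Z2x | /prodf_neq0 diag_nz] := eqVneq (\prod_i conj_entry x.1 i i) 0.
    by right.
  left=> i j ij; have [ii0 | //] := stabilizer_row_monomial gen (YG x Yx) (b0 x Yx) i ij.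
  by move: (diag_nz i isT); rewrite ii0 eqxx.
have disjoint x : Y x -> eigen_diagonal x -> eigen_diagonal_degenerate x -> False.
  by move=> Yx; apply: eigen_diagonal_degenerate_unit (YG x Yx).1.
have [Y_diag | Y_degenerate] := Y_conn _ _ zariski_closed_eigen_diagonal
  zariski_closed_eigen_diagonal_degenerate cover disjoint; last first.
  exfalso; apply: (disjoint _ Y1 _ (Y_degenerate _ Y1)) => i j ij.
  by rewrite conj_entry1 (negPf ij).
split; last exact: b0.
exact: stabilizer_diagonal_in_torus (YG g Yg) (b0 g Yg) (Y_diag g Yg).
Qed.

Lemma torus_sub_stabilizer g : H g.1 -> g.2 = 0 -> orbit_stabilizer H v g.
Proof.
case: g => _ b /= /HE [t [t_nz ->]] ->; split; first exact: torus_elt_unit.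
move=> w; split=> [[_ [/HE [s [s_nz ->]] ->]] | [_ [[_ [/HE [s [s_nz ->]] ->]] ->]]].
  have ts_nz := torus_pointM (torus_pointV t_nz) s_nz.
  exists (T (fun k => (t k)^-1 * s k) *m v); split.
    by exists (T (fun k => (t k)^-1 * s k)); split=> //; apply: torus_elt_in.
  rewrite aff_act0 [RHS](torus_eltMv _ t_nz ts_nz).
  by rewrite (eq_torus_elt (s := s)) // => k; rewrite mulVKf.
exists (T (fun k => t k * s k)); split; first exact/torus_elt_in/torus_pointM.
by rewrite aff_act0 [LHS](torus_eltMv _ t_nz s_nz).
Qed.

(* Two points of the torus are joined by the line through them, which stays in
   the torus off the roots of the product of its coordinates. *)
Lemma torus_zariski_connected : zariski_connected (fun g => H g.1 /\ g.2 = 0).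
Proof.
apply: zariski_connected_curves.
move=> [_ _] [_ _] /= [/HE [t1 [t1_nz ->]] ->] [/HE [t2 [t2_nz ->]] ->].
pose U k : {poly C} := (t1 k)%:P + (t2 k - t1 k) *: 'X.
have U0 k : (U k).[0] = t1 k by rewrite hornerD hornerC hornerZ hornerX mulr0 addr0.
have U1 k : (U k).[1] = t2 k by rewrite hornerD hornerC hornerZ hornerX mulr1 addrC subrK.
pose Q := \prod_k U k.
have UQ z k : Q.[z] != 0 -> (U k).[z] != 0 by rewrite horner_prod => /prodf_neq0; apply.
exists Q, (fun z => (T (fun k => (U k).[z]), 0)); split; first split.
- by rewrite horner_prod; apply/prodf_neq0 => k _; rewrite U0.
- by rewrite horner_prod; apply/prodf_neq0 => k _; rewrite U1.
- by rewrite (eq_torus_elt (t := fun k => (U k).[0]) U0).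
- by rewrite (eq_torus_elt (t := fun k => (U k).[1]) U1).
- by move=> z zQ; split=> //; apply: torus_elt_in => k; apply: UQ.
apply: regular_off_aff_coords => k l.
apply: eq_regular_off (fun z => esym (torus_elt_entry _ k l)) _.
apply: regular_off_sum => i; apply: regular_offM (regular_off_const _ _) _.
apply: regular_offM (regular_off_const _ _); apply: regular_off_prod => k'.
by apply: regular_off_exprz => z; apply: UQ.
Qed.

Lemma torus_sub_identity_component g :
  H g.1 -> g.2 = 0 -> identity_component (orbit_stabilizer H v) g.
Proof.
move=> Hg g2; exists (fun x => H x.1 /\ x.2 = 0).
split; first exact: torus_zariski_connected.
split; first by move=> x [Hx x2]; apply: torus_sub_stabilizer.
by split; [split=> //; rewrite -torus_elt1; apply: torus_elt_in torus_point1 | ].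
Qed.

End TorusOrbit.

Theorem theorem3p9 (R : realType) (n : nat) (H : 'M[R[i]]_n -> Prop)
    (v : 'cV[R[i]]_n) :
  is_torus H -> no_fixed_vectors H ->
  (forall g, orbit_stabilizer H v g -> g.2 = 0) /\
  (generic H v ->
     forall g, identity_component (orbit_stabilizer H v) g <-> (H g.1 /\ g.2 = 0)).
Proof.
move=> [r [P [a [P_unit HE]]]] nf; split=> [g | gen g].
  exact: (stabilizer_translation_eq0 P_unit HE nf).
split; first exact: (identity_component_sub_torus P_unit HE gen nf).
by case; exact: (torus_sub_identity_component v P_unit HE).
Qed.
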